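(* Let $(M,d)$ be a metric space, $\mathsf{P}\subseteq M$ a set of $n$ points, and $1\le \ell\le k\le n$ integers; put $m=\lfloor k/\ell\rfloor$. Let $c\ge 1$ and let $Q=\{q_1,\dots,q_m\}\subseteq \mathsf{P}$ be a set of $m$ points that is a $c$-approximate solution to the (non-fault-tolerant) $m$-median problem on $\mathsf{P}$, i.e. $\sum_{p\in\mathsf{P}} d_Q(p,1)\le c\cdot \sigma_{\mathrm{med}}$, where $\sigma_{\mathrm{med}}=\min_{S\subseteq\mathsf{P},|S|=m}\sum_{p\in\mathsf{P}} d_S(p,1)$. Let $C\subseteq\mathsf{P}$ be any set with $|C|=k$ and $C\supseteq \bigcup_{i=1}^m N_{\mathsf{P}}(q_i,\ell)$. Then $$\sum_{p\in\mathsf{P}} d_C(p,\ell)\;\le\;(1+4c)\,\sigma_{\mathrm{opt}},\qquad\text{where } \sigma_{\mathrm{opt}}=\min_{C'\subseteq\mathsf{P},\,|C'|=k}\ \sum_{p\in\mathsf{P}} d_{C'}(p,\ell).$$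
   Context: For a finite set $S\subseteq M$, a point $p\in M$ and an integer $1\le i\le |S|$, $d_S(p,i)$ denotes the radius of the smallest closed ball centered at $p$ containing at least $i$ points of $S$ (the distance from $p$ to its $i$-th nearest neighbor in $S$). The $i$ nearest neighbors of $p$ in $S$ are determined by ordering the points $s\in S$ lexicographically by the pair $(d(p,s),\text{index of } s)$ (points of $\mathsf{P}=\{p_1,\dots,p_n\}$ are indexed), so they are unique; $N_S(p,i)$ denotes the set of the first $i$ points in this order, so $|N_S(p,i)|=i$. The fault-tolerant $k$-median cost of $C$ is $\sum_{p\in\mathsf{P}} d_C(p,\ell)$; the case $\ell=1$ is ordinary $k$-median. *)

From HB Require Import structures.
From mathcomp Require Import all_boot all_order all_algebra.
Set Implicit Arguments. Unset Strict Implicit. Unset Printing Implicit Defensive.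
Import Order.TTheory GRing.Theory Num.Theory.
Local Open Scope ring_scope.

Definition is_metric (R : realFieldType) (M : Type) (d : M -> M -> R) : Prop :=
  [/\ forall x y, 0 <= d x y,
      forall x y, d x y = 0 <-> x = y,
      forall x y, d x y = d y x
    & forall x y z, d x z <= d x y + d y z].

(* The point set P = {p_1,...,p_n} is given by pts : 'I_n -> M (injective);
   subsets of P are sets of indices {set 'I_n}. *)

Definition dS (R : realFieldType) (M : Type) (d : M -> M -> R) (n : nat)
  (pts : 'I_n -> M) (p : M) (S : {set 'I_n}) (i : nat) : R :=
  nth 0 (sort <=%R [seq d p (pts s) | s <- enum S]) i.-1.

Definition nn_rel (R : realFieldType) (M : Type) (d : M -> M -> R) (n : nat)
  (pts : 'I_n -> M) (p : M) : rel 'I_n :=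
  fun s t => (d p (pts s) < d p (pts t)) ||
             ((d p (pts s) == d p (pts t)) && (s <= t)%N).

Definition NS (R : realFieldType) (M : Type) (d : M -> M -> R) (n : nat)
  (pts : 'I_n -> M) (p : M) (S : {set 'I_n}) (i : nat) : {set 'I_n} :=
  [set s | s \in take i (sort (nn_rel d pts p) (enum S))].

Definition ftcost (R : realFieldType) (M : Type) (d : M -> M -> R) (n : nat)
  (pts : 'I_n -> M) (C : {set 'I_n}) (l : nat) : R :=
  \sum_(j < n) dS d pts (pts j) C l.

From HB Require Import structures.
From mathcomp Require Import all_boot all_order all_algebra.
From mathcomp Require Import zify lra.
Set Implicit Arguments.
Unset Strict Implicit.
Unset Printing Implicit Defensive.
Import Order.TTheory GRing.Theory Num.Theory.
Local Open Scope ring_scope.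

(* Write opt = ftcost C' l for an arbitrary competitor C' of size k.
   1. (ftcost_cover_le) For every point p, let q be its nearest centre in Q.
      Since C contains the l nearest neighbours of q, and the ball around p
      of radius d_{C'}(p,l) already holds l points, the triangle inequality
      gives d_C(p,l) <= 2 d_Q(p,1) + d_{C'}(p,l).  Summing:
      ftcost C l <= 2 ftcost Q 1 + opt.
   2. (median_from_ft) Choosing greedily, by increasing radius, points whose
      l-balls in C' are pairwise disjoint yields at most k %/ l points; padded
      to exactly k %/ l points they form a set S with ftcost S 1 <= 2 opt.  With ftcost Q 1 <= c ftcost S 1 this gives
      ftcost C l <= (1 + 4c) opt. *)

Section OrderStatistic.
Variables (R : realFieldType) (T : finType) (f : T -> R) (S : {set T}).

Definition kth (i : nat) : R := nth 0 (sort <=%R [seq f x | x <- enum S]) i.-1.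

Let vals := sort <=%R [seq f x | x <- enum S].

Let vals_sorted : sorted <=%R vals.
Proof. exact/sort_sorted/le_total. Qed.

Let size_vals : size vals = #|S|.
Proof. by rewrite size_sort size_map cardE. Qed.

Let count_vals (rho : R) :
  count (fun v => v <= rho) vals = #|[set x in S | f x <= rho]|.
Proof.
have /permP -> : perm_eq vals [seq f x | x <- enum S] by rewrite perm_sort.
rewrite count_map cardE /enum_mem -size_filter -filter_predI.
by congr size; apply: eq_filter => x; rewrite /= !inE andbC.
Qed.

Lemma kth_card (i : nat) : (0 < i <= #|S|)%N ->
  leq i #|[set x in S | f x <= kth i]|.
Proof.
case/andP=> i_gt0 i_le; rewrite -count_vals -(cat_take_drop i vals) count_cat.
apply: leq_trans (leq_addr _ _).
have size_take_i : size (take i vals) = i by rewrite size_takel ?size_vals.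
suff : all (fun v => v <= kth i) (take i vals).
  by rewrite all_count size_take_i => /eqP ->.
apply/(all_nthP 0) => j; rewrite size_take_i => j_lt.
rewrite nth_take //; apply: (le_sorted_leq_nth 0 vals_sorted); rewrite ?inE ?size_vals;
  by move: i_gt0 j_lt i_le; lia.
Qed.

Lemma kth_le (i : nat) (rho : R) : (0 < i)%N ->
  leq i #|[set x in S | f x <= rho]| -> kth i <= rho.
Proof.
case: i => // i _; rewrite leNgt -count_vals => cnt; apply/negP => rho_lt.
have drop_above : count (fun v => v <= rho) (drop i vals) = 0%N.
  apply/eqP; rewrite -leqn0 leqNgt -has_count; apply/hasPn => y /(nthP 0) [j].
  rewrite size_drop nth_drop -ltNge => j_lt <-; apply: lt_le_trans rho_lt _.
  by apply: (le_sorted_leq_nth 0 vals_sorted); rewrite /= ?inE ?leq_addr //;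
    move: (size vals) j_lt => N; lia.
move: cnt; rewrite -(cat_take_drop i vals) count_cat drop_above addn0.
by move/leq_trans/(_ (count_size _ _)); rewrite size_take_min ltnNge geq_minl.
Qed.

End OrderStatistic.

Section NearestNeighbours.
Variables (R : realFieldType) (M : Type) (d : M -> M -> R) (n : nat)
  (pts : 'I_n -> M) (q : M).

Let nn_total : total (nn_rel d pts q).
Proof.
move=> s t; rewrite /nn_rel.
by case: (ltgtP (d q (pts s)) (d q (pts t))) => //= _; exact: leq_total.
Qed.

Let nn_trans : transitive (nn_rel d pts q).
Proof.
move=> t s u; rewrite /nn_rel.
move=> /orP[st|/andP[/eqP st st']] /orP[tu|/andP[/eqP tu tu']].
- by rewrite (lt_trans st tu).
- by rewrite -tu st.
- by rewrite st tu.
- by rewrite st tu eqxx (leq_trans st' tu') orbT.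
Qed.

Let nn_list := sort (nn_rel d pts q) (enum [set: 'I_n]).

Lemma card_NS (l : nat) : (l <= n)%N -> #|NS d pts q [set: 'I_n] l| = l.
Proof.
move=> l_le_n; rewrite /NS -/nn_list.
have -> : #|[set s | s \in take l nn_list]| = #|take l nn_list|.
  by apply: eq_card => s; rewrite inE.
rewrite (card_uniqP _) ?take_uniq ?sort_uniq ?enum_uniq //.
by rewrite size_takel // size_sort -cardE cardsT card_ord.
Qed.

Lemma NS_within (l : nat) (rho : R) (X : {set 'I_n}) :
  (forall x, x \in X -> d q (pts x) <= rho) -> (l <= #|X|)%N ->
  forall s, s \in NS d pts q [set: 'I_n] l -> d q (pts s) <= rho.
Proof.
move=> X_near l_le s; rewrite inE -/nn_list => s_in; rewrite leNgt; apply/negP => s_far.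
have : pairwise (nn_rel d pts q) nn_list.
  by rewrite -(sorted_pairwise nn_trans) sort_sorted.
rewrite -(cat_take_drop l nn_list) pairwise_cat => /and3P[/allrelP before _ _].
have X_take : X \subset take l nn_list.
  apply/subsetP => x xX; have := X_near x xX => x_near.
  have : x \in take l nn_list ++ drop l nn_list.
    by rewrite cat_take_drop mem_sort mem_enum inE.
  rewrite mem_cat => /orP[// | x_drop].
  move: (before s x s_in x_drop); rewrite /nn_rel.
  case/orP=> [sx | /andP[/eqP sx _]].
    by have := lt_trans (le_lt_trans x_near s_far) sx; rewrite ltxx.
  by move: x_near; rewrite -sx leNgt s_far.
have sX : s \notin X by apply: contraL s_far => /X_near; rewrite -leNgt.
have : (#|s |: X| <= #|take l nn_list|)%N.
  apply/subset_leq_card/subsetP => y; rewrite in_setU1.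
  by case/orP=> [/eqP -> | /(subsetP X_take)].
rewrite cardsU1 sX => /leq_trans/(_ (card_size _)).
by rewrite size_take_min add1n => /leq_trans/(_ (geq_minl _ _)); rewrite ltnNge l_le.
Qed.

End NearestNeighbours.

Lemma superset_of_card (T : finType) (S : {set T}) (m : nat) :
  (#|S| <= m <= #|T|)%N -> exists2 S' : {set T}, S \subset S' & #|S'| = m.
Proof.
elim: m => [|m IH] /andP[S_le m_le].
  by exists S => //; apply/eqP; rewrite -leqn0.
have [/eqP S_eq | S_ne] := boolP (#|S| == m.+1); first by exists S.
have [|S' SS' S'_card] := IH; first by move: S_le S_ne m_le; lia.
have : (0 < #|~: S'|)%N by rewrite cardsCs setCK S'_card; move: m_le; lia.
case/card_gt0P => x; rewrite inE => xS'.
exists (x |: S'); first exact: subset_trans SS' (subsetUr _ _).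
by rewrite cardsU1 xS' S'_card.
Qed.

Section GreedySelection.
Variables (R : realFieldType) (T V : finType) (r : T -> R) (B : T -> {set V}).
Variable l : nat.
Hypotheses (l_gt0 : (0 < l)%N) (B_large : forall p, (l <= #|B p|)%N).

(* Greedy selection in increasing order of r: from any U one can pick S
   whose sets B s are pairwise disjoint (so their union has at least
   #|S| * l elements) and such that every p in U meets some B s with
   r s <= r p. *)
Lemma greedy_disjoint_selection (U : {set T}) :
  exists S : {set T}, [/\ S \subset U, (#|S| * l <= #|\bigcup_(s in S) B s|)%N &
    forall p, p \in U -> exists2 s, s \in S & ~~ [disjoint B s & B p] && (r s <= r p)].
Proof.
elim: {U}_.+1 {-2}U (ltnSn #|U|) => // N IH U U_lt.
have [-> | [x0 x0U]] := set_0Vmem U.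
  by exists set0; split=> [||p]; rewrite ?sub0set ?cards0 ?inE.
have B_meets p : ~~ [disjoint B p & B p].
  by rewrite -setI_eq0 setIid -card_gt0 (leq_trans l_gt0).
have [p0 p0U p0_min] : exists2 p0, p0 \in U & forall p, p \in U -> r p0 <= r p.
  by case: (arg_minP r x0U) => p0; exists p0.
set U' := [set p in U | [disjoint B p0 & B p]].
have [|S' [S'U' S'_card S'_cover]] := IH U'.
  rewrite -ltnS; apply: leq_trans U_lt; rewrite ltnS; apply/proper_card/properP; split.
    by apply/subsetP => p; rewrite inE => /andP[].
  by exists p0; rewrite // inE p0U /= (negbTE (B_meets p0)).
have p0_apart s : s \in S' -> [disjoint B p0 & B s].
  by move/(subsetP S'U'); rewrite inE => /andP[].
have p0S' : p0 \notin S' by apply: contra (B_meets p0) => /p0_apart.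
exists (p0 |: S'); split.
- rewrite subUset sub1set p0U; apply: subset_trans S'U' _.
  by apply/subsetP => p; rewrite inE => /andP[].
- have /eqP card_union : #|B p0 :|: \bigcup_(s in S') B s| ==
                           (#|B p0| + #|\bigcup_(s in S') B s|)%N.
    by rewrite (leq_card_setU _ (\bigcup_(s in S') B s)).2 bigcup_disjoint.
  rewrite bigcup_setU big_set1 card_union.
  by rewrite cardsU1 p0S' mulnDl mul1n leq_add.
move=> p pU; have [p0p | p0p] := boolP [disjoint B p0 & B p].
  have [|s sS' s_good] := S'_cover p; first by rewrite inE pU p0p.
  by exists s; rewrite // in_setU1 sS' orbT.
by exists p0; rewrite ?setU11 // p0p p0_min.
Qed.
End GreedySelection.

Section FaultTolerantCost.
Variables (R : realFieldType) (M : Type) (d : M -> M -> R) (n : nat) (pts : 'I_n -> M).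
Hypotheses (d_sym : forall x y, d x y = d y x)
           (d_tri : forall x y z, d x z <= d x y + d y z).

Lemma dS_kth (p : M) (S : {set 'I_n}) (i : nat) :
  dS d pts p S i = kth (fun s => d p (pts s)) S i.
Proof. by []. Qed.

(* Pointwise step: take q in Q nearest to p. The l points of C' within
   d_{C'}(p,l) of p certify that N_P(q,l) lies within d(p,q) + d_{C'}(p,l)
   of q, hence within 2 d_Q(p,1) + d_{C'}(p,l) of p; these l points are in C. *)
Lemma dS_cover_le (l : nat) (Q C C' : {set 'I_n}) (p : M) :
  (0 < l <= n)%N -> (0 < #|Q|)%N -> (l <= #|C'|)%N ->
  (\bigcup_(q in Q) NS d pts (pts q) [set: 'I_n] l) \subset C ->
  dS d pts p C l <= 2 * dS d pts p Q 1 + dS d pts p C' l.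
Proof.
move=> /andP[l_gt0 l_le_n] Q_gt0 l_le_C' QC.
set a := dS d pts p Q 1; set b := dS d pts p C' l.
have : leq 1 #|[set x in Q | d p (pts x) <= a]| by apply: kth_card; rewrite Q_gt0.
case/card_gt0P => q; rewrite inE => /andP[qQ qp].
have NS_q_near s : s \in NS d pts (pts q) [set: 'I_n] l ->
    d (pts q) (pts s) <= d (pts q) p + b.
  apply: (NS_within (X := [set x in C' | d p (pts x) <= b])).
    move=> x; rewrite inE => /andP[_ xb].
    by apply: le_trans (d_tri _ p _) _; rewrite lerD2l.
  by apply: kth_card; rewrite l_gt0 l_le_C'.
rewrite dS_kth; apply: kth_le => //.
rewrite -{1}(card_NS d pts (pts q) l_le_n); apply/subset_leq_card/subsetP => s sN.
rewrite inE (subsetP QC) /=; last by apply/bigcupP; exists q.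
apply: le_trans (d_tri _ (pts q) _) _.
by have := NS_q_near s sN; rewrite (d_sym (pts q) p); lra.
Qed.

Lemma ftcost_cover_le (l : nat) (Q C C' : {set 'I_n}) :
  (0 < l <= n)%N -> (0 < #|Q|)%N -> (l <= #|C'|)%N ->
  (\bigcup_(q in Q) NS d pts (pts q) [set: 'I_n] l) \subset C ->
  ftcost d pts C l <= 2 * ftcost d pts Q 1 + ftcost d pts C' l.
Proof.
move=> l_range Q_gt0 l_le QC; rewrite /ftcost mulr_sumr -big_split /=.
by apply: ler_sum => j _; apply: dS_cover_le.
Qed.

(* From any C' one obtains a set of #|C'| %/ l medians whose 1-median cost
   is at most twice the l-fault-tolerant cost of C': greedily keep points
   whose balls B p = {x in C' | d(p,x) <= d_{C'}(p,l)} are disjoint, in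
   increasing order of radius, and pad to the required size. *)
Lemma median_from_ft (l : nat) (C' : {set 'I_n}) :
  (0 < l <= #|C'|)%N ->
  exists2 S : {set 'I_n}, #|S| = (#|C'| %/ l)%N &
    ftcost d pts S 1 <= 2 * ftcost d pts C' l.
Proof.
case/andP=> l_gt0 l_le.
pose r j := dS d pts (pts j) C' l.
pose B j := [set x in C' | d (pts j) (pts x) <= r j].
have B_large j : (l <= #|B j|)%N by apply: kth_card; rewrite l_gt0 l_le.
have [S0 [_ S0_card S0_cover]] := greedy_disjoint_selection r l_gt0 B_large [set: 'I_n].
have S0_le : (#|S0| <= #|C'| %/ l)%N.
  rewrite leq_divRL //; apply: leq_trans S0_card (subset_leq_card _).
  by apply/bigcupsP => s _; apply/subsetP => x; rewrite inE => /andP[].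
have [|S S0S S_card] := superset_of_card (S := S0) (m := (#|C'| %/ l)%N).
  by rewrite S0_le (leq_trans (leq_div _ _) (max_card _)).
exists S => //; rewrite /ftcost mulr_sumr; apply: ler_sum => j _.
have [s sS0 /andP[/pred0Pn[x /andP[]]]] := S0_cover j (in_setT j).
rewrite !inE => /andP[_ sx] /andP[_ jx] rs_le.
rewrite dS_kth; apply: kth_le => //; rewrite card_gt0; apply/set0Pn; exists s.
rewrite inE (subsetP S0S _ sS0) /=; apply: le_trans (d_tri _ (pts x) _) _.
by rewrite (d_sym (pts x)); move: sx jx rs_le; rewrite -/(r j) -/(r s); lra.
Qed.

End FaultTolerantCost.

Theorem theorem1 (R : realFieldType) (M : Type) (d : M -> M -> R)
  (n : nat) (pts : 'I_n -> M) (l k : nat) (c : R)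
  (Q C : {set 'I_n}) :
  is_metric d ->
  injective pts ->
  (1 <= l)%N -> (l <= k)%N -> (k <= n)%N ->
  1 <= c ->
  #|Q| = (k %/ l)%N ->
  (forall S : {set 'I_n}, #|S| = (k %/ l)%N ->
     ftcost d pts Q 1 <= c * ftcost d pts S 1) ->
  #|C| = k ->
  (\bigcup_(q in Q) NS d pts (pts q) [set: 'I_n] l) \subset C ->
  forall C' : {set 'I_n}, #|C'| = k ->
    ftcost d pts C l <= (1 + 4 * c) * ftcost d pts C' l.
Proof.
move=> [_ _ d_sym d_tri] _ l_gt0 l_le_k k_le_n c_ge1 Q_card Q_approx _ QC C' C'_card.
have Q_gt0 : (0 < #|Q|)%N by rewrite Q_card divn_gt0.
have l_range : (0 < l <= n)%N by rewrite l_gt0 (leq_trans l_le_k k_le_n).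
have l_le_C' : (l <= #|C'|)%N by rewrite C'_card.
have cost_C := ftcost_cover_le d_sym d_tri l_range Q_gt0 l_le_C' QC.
have [|S S_card cost_S] := median_from_ft pts d_sym d_tri (l := l) (C' := C').
  by rewrite l_gt0 l_le_C'.
rewrite C'_card in S_card; have cost_Q := Q_approx S S_card.
have : c * ftcost d pts S 1 <= c * (2 * ftcost d pts C' l).
  by rewrite ler_pM2l ?(lt_le_trans ltr01 c_ge1).
by move: cost_C cost_Q; lra.
Qed.
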